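(* Let $x_0,\dots,x_q$ be complex numbers (repetitions allowed), $q\ge0$, $0\le j\le q$, and $\beta>0$. Then $$\int_0^{\beta/2}\tau\,e^{-\tau[x_j,\ldots,x_q]}\,e^{-(\beta-\tau)[x_0,\ldots,x_j]}\,\mathrm{d}\tau=\sum_{r=0}^{j}e^{-\frac{\beta}{2}[x_0,\ldots,x_r]}\sum_{m=j}^{q}e^{-\frac{\beta}{2}[x_r,\ldots,x_q,x_j,x_m]}.$$
   Context: For $t\in\mathbb{R}$ and numbers $y_0,\dots,y_p$ (repetitions allowed), $e^{t[y_0,\ldots,y_p]}$ denotes the divided difference of $f(x)=e^{tx}$, $f[y_0,\ldots,y_p]=\frac{1}{2\pi i}\oint_\Gamma\frac{f(x)}{\prod_{i=0}^p(x-y_i)}\,\mathrm{d}x$, $\Gamma$ a positively oriented contour enclosing all $y_i$. The multiset $[x_r,\ldots,x_q,x_j,x_m]$ consists of $x_r,\ldots,x_q$ together with one extra copy of $x_j$ and one extra copy of $x_m$. *)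

From Stdlib Require Import Reals List.
From Coquelicot Require Import Coquelicot.
Open Scope R_scope.

Definition cexp (z : C) : C :=
  (exp (Re z) * cos (Im z), exp (Re z) * sin (Im z)).

Definition cprod (l : list C) : C := fold_right Cmult (RtoC 1) l.

Definition cRInt (f : R -> C) (a b : R) : C :=
  @RInt C_R_CompleteNormedModule f a b.

(* Divided difference f[y_0,...,y_p] = (1/(2 pi i)) \oint_Gamma f(x)/prod(x-y_i) dx,
   with Gamma the positively oriented circle |x| = rho, rho = 1 + sum |y_i|,
   which encloses all y_i.  Parametrising x = rho e^{i th}, dx = i rho e^{i th} d th:
   f[ys] = (1/(2 pi)) \int_0^{2 pi} f(x(th)) * rho e^{i th} / prod (x(th) - y_i) d th. *)
Definition dd_radius (ys : list C) : R :=
  1 + fold_right (fun y s => Cmod y + s) 0 ys.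

Definition divdiff (f : C -> C) (ys : list C) : C :=
  let rho := dd_radius ys in
  Cmult (RtoC (/ (2 * PI)))
    (cRInt (fun th =>
       let x : C := Cmult (RtoC rho) (cexp (0, th)) in
       Cdiv (Cmult (f x) x) (cprod (map (fun y => Cminus x y) ys)))
     0 (2 * PI)).

(* e^{t[y_0,...,y_p]} : divided difference of x |-> e^{t x}. *)
Definition expdd (t : R) (ys : list C) : C :=
  divdiff (fun x => cexp (Cmult (RtoC t) x)) ys.

(* The multiset/list [x_a, ..., x_b] (empty if b < a). *)
Definition xs (x : nat -> C) (a b : nat) : list C := map x (seq a (S b - a)).

(* Write E_L(t) for e^{t[L]}. On a circle |z| = rho enclosing L, with P_L(z) the product of the
   z - y over y in L, the moments G_k(t) = (1/2pi) \int z^k e^{tz} z / P_L(z) dtheta satisfy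
   G_k' = G_(k+1), G^(y::L)_(k+1) - y G^(y::L)_k = G^L_k, G^[]_0 = 0, and, for k < |L|,
   G_k(0) = 1 if k + 1 = |L| and 0 otherwise (the circle means of z^a / (z^b P_L(z)) obey a
   recursion whose error decays geometrically). For two radii the difference of the G_0 is thus
   killed by P_L(d/dt) and has zero initial data, so E_L does not depend on the radius. Hence E is
   symmetric in L, E_[] = 0, E_L(0) = [|L| = 1] and d/dt E_(y::L) = y E_(y::L) + E_L.
   Uniqueness for u' = c u + h then gives the addition formula
   E_(s+t)[x_r..x_j] = sum_i E_s[x_r..x_i] E_t[x_i..x_j], the identity sum_m E_t[B,x_m] = t E_t[B]
   for B = [x_j..x_q], and, once the addition formula has split e^{-(beta-tau)[x_0..x_j]} at
   beta/2, the identity sum_i e^{-a[x_i..x_j]} \int_0^a tau e^{-tau[B]} e^{tau[x_r..x_i]} dtau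
   = sum_m e^{-a[x_r..x_j,B,x_m]}, proved as an ODE in a by induction on j. *)

From Stdlib Require Import Reals List Lra Lia Permutation.
From Coquelicot Require Import Coquelicot.
Open Scope R_scope.

(** * Complex-valued functions of a real variable *)

Lemma is_derive_eq (f : R -> R) (t l l' : R) :
  is_derive f t l -> l = l' -> is_derive f t l'.
Proof. now intros H <-. Qed.

Lemma is_derive_C_eq (f : R -> C) (t : R) (l l' : C) :
  is_derive f t l -> l = l' -> is_derive f t l'.
Proof. now intros H <-. Qed.

Lemma is_derive_fst (f : R -> C) (t : R) (l : C) :
  is_derive f t l -> is_derive (fun s => fst (f s)) t (fst l).
Proof.
  intros H. apply (filterdiff_comp' f fst t _ fst H).
  apply filterdiff_linear, is_linear_fst.
Qed.

Lemma is_derive_snd (f : R -> C) (t : R) (l : C) :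
  is_derive f t l -> is_derive (fun s => snd (f s)) t (snd l).
Proof.
  intros H. apply (filterdiff_comp' f snd t _ snd H).
  apply filterdiff_linear, is_linear_snd.
Qed.

Lemma is_derive_C_components (f : R -> C) (t : R) (l : C) :
  is_derive (fun s => fst (f s)) t (fst l) -> is_derive (fun s => snd (f s)) t (snd l) ->
  is_derive f t l.
Proof.
  intros H1 H2.
  assert (H := filterdiff_comp'_2 (K := R_AbsRing) (fun s => fst (f s)) (fun s => snd (f s))
                 (fun u v => (u, v) : C) t _ _ (fun u v => (u, v)) H1 H2).
  eapply filterdiff_ext; [|eapply filterdiff_ext_lin; [apply H|]].
  - intros s; simpl; now destruct (f s).
  - apply filterdiff_linear. split.
    + now intros [a b] [c d].
    + now intros k [a b].
    + exists 1. split; [lra|]. intros [a b]. rewrite Rmult_1_l. apply Rle_refl.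
  - intros y. now destruct l.
Qed.

Lemma is_derive_Rmult (u v : R -> R) (t du dv : R) :
  is_derive u t du -> is_derive v t dv -> is_derive (fun s => u s * v s) t (du * v t + u t * dv).
Proof. intros H1 H2. apply (is_derive_mult u v t du dv H1 H2). intros; apply Rmult_comm. Qed.

Lemma is_derive_Rplus (u v : R -> R) (t du dv : R) :
  is_derive u t du -> is_derive v t dv -> is_derive (fun s => u s + v s) t (du + dv).
Proof. apply (is_derive_plus u v). Qed.

Lemma is_derive_Rminus (u v : R -> R) (t du dv : R) :
  is_derive u t du -> is_derive v t dv -> is_derive (fun s => u s - v s) t (du - dv).
Proof. apply (is_derive_minus u v). Qed.

Lemma is_derive_Rcomp (F g : R -> R) (t dF dg : R) :
  is_derive F (g t) dF -> is_derive g t dg -> is_derive (fun s => F (g s)) t (dF * dg).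
Proof.
  intros H1 H2. eapply is_derive_eq; [apply (is_derive_comp F g t dF dg H1 H2)|].
  apply Rmult_comm.
Qed.

Lemma is_derive_Cconst (c : C) (t : R) : is_derive (fun _ : R => c) t (RtoC 0).
Proof. apply (is_derive_const (K := R_AbsRing) (V := C_R_NormedModule)). Qed.

Lemma is_derive_RtoC (g : R -> R) (t l : R) :
  is_derive g t l -> is_derive (fun s => RtoC (g s)) t (RtoC l).
Proof.
  intros H. apply is_derive_C_components; simpl; [exact H|].
  apply (is_derive_const (K := R_AbsRing) (V := R_NormedModule)).
Qed.

Lemma is_derive_Cplus (f g : R -> C) (t : R) (df dg : C) :
  is_derive f t df -> is_derive g t dg -> is_derive (fun s => Cplus (f s) (g s)) t (Cplus df dg).
Proof. apply (is_derive_plus (V := C_R_NormedModule)). Qed.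

Lemma is_derive_Cminus (f g : R -> C) (t : R) (df dg : C) :
  is_derive f t df -> is_derive g t dg -> is_derive (fun s => Cminus (f s) (g s)) t (Cminus df dg).
Proof. apply (is_derive_minus (V := C_R_NormedModule)). Qed.

Lemma is_derive_Cmult (f g : R -> C) (t : R) (df dg : C) :
  is_derive f t df -> is_derive g t dg ->
  is_derive (fun s => Cmult (f s) (g s)) t (Cplus (Cmult df (g t)) (Cmult (f t) dg)).
Proof.
  intros H1 H2.
  pose proof (is_derive_fst _ _ _ H1). pose proof (is_derive_snd _ _ _ H1).
  pose proof (is_derive_fst _ _ _ H2). pose proof (is_derive_snd _ _ _ H2).
  apply is_derive_C_components; simpl.
  - eapply is_derive_eq; [apply is_derive_Rminus; apply is_derive_Rmult; eassumption|].
    simpl; ring.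
  - eapply is_derive_eq; [apply is_derive_Rplus; apply is_derive_Rmult; eassumption|].
    simpl; ring.
Qed.

Lemma is_derive_Cscal (c : C) (f : R -> C) (t : R) (df : C) :
  is_derive f t df -> is_derive (fun s => Cmult c (f s)) t (Cmult c df).
Proof.
  intros H. eapply is_derive_C_eq; [apply is_derive_Cmult; [apply is_derive_Cconst|exact H]|].
  simpl; ring.
Qed.

Lemma is_derive_Cinv (f : R -> C) (t : R) (df : C) :
  is_derive f t df -> f t <> 0%C ->
  is_derive (fun s => Cinv (f s)) t (Copp (Cdiv df (Cmult (f t) (f t)))).
Proof.
  intros Hf Hnz.
  pose proof (is_derive_fst _ _ _ Hf) as Ha. pose proof (is_derive_snd _ _ _ Hf) as Hb.
  assert (Hsq : forall u du, is_derive u t du -> is_derive (fun s => u s ^ 2) t (2 * u t * du)).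
  { intros u du Hu. apply (is_derive_ext (fun s => u s * u s)); [intros; simpl; ring|].
    eapply is_derive_eq; [apply is_derive_Rmult; exact Hu|]. ring. }
  assert (HD := is_derive_Rplus _ _ _ _ _ (Hsq _ _ Ha) (Hsq _ _ Hb)).
  assert (Hd : fst (f t) ^ 2 + snd (f t) ^ 2 <> 0).
  { intros E. apply Hnz. destruct (f t) as [a b]; simpl in *.
    assert (a = 0) by nra. assert (b = 0) by nra. now subst. }
  apply is_derive_C_components.
  - eapply is_derive_eq; [apply is_derive_Rmult; [exact Ha|apply is_derive_inv; [exact HD|exact Hd]]|].
    cbv beta. revert Hd. destruct (f t) as [a b], df as [c d]; simpl; intros Hd.
    field; split; intro; apply Hd; nra.
  - eapply is_derive_eq.
    { apply is_derive_Rmult; [apply (is_derive_opp (fun s => snd (f s))), Hb|].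
      apply is_derive_inv; [exact HD|exact Hd]. }
    cbv beta. revert Hd. destruct (f t) as [a b], df as [c d]; simpl; intros Hd. unfold opp; simpl.
    field; split; intro; apply Hd; nra.
Qed.

Lemma is_derive_cexp (f : R -> C) (t : R) (df : C) :
  is_derive f t df -> is_derive (fun s => cexp (f s)) t (Cmult (cexp (f t)) df).
Proof.
  intros Hf.
  pose proof (is_derive_fst _ _ _ Hf) as Ha. pose proof (is_derive_snd _ _ _ Hf) as Hb.
  assert (Dexp : forall y, is_derive exp y (exp y)) by (intros; auto_derive; auto; ring).
  assert (Dcos : forall y, is_derive cos y (- sin y)) by (intros; auto_derive; auto; ring).
  assert (Dsin : forall y, is_derive sin y (cos y)) by (intros; auto_derive; auto; ring).
  unfold cexp. apply is_derive_C_components; simpl.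
  - eapply is_derive_eq.
    { apply is_derive_Rmult; apply is_derive_Rcomp; [apply Dexp|exact Ha|apply Dcos|exact Hb]. }
    simpl; ring.
  - eapply is_derive_eq.
    { apply is_derive_Rmult; apply is_derive_Rcomp; [apply Dexp|exact Ha|apply Dsin|exact Hb]. }
    simpl; ring.
Qed.

Lemma is_derive_RtoC_id (t : R) : is_derive (fun s : R => RtoC s) t (RtoC 1).
Proof. apply is_derive_RtoC. auto_derive; auto; ring. Qed.

Lemma is_derive_affine (F : R -> C) (c d t : R) (l : C) :
  is_derive F (c * t + d) l -> is_derive (fun s => F (c * s + d)) t (Cmult (RtoC c) l).
Proof.
  intros H. assert (Hg : is_derive (fun s : R => c * s + d) t c) by (auto_derive; auto; ring).
  eapply is_derive_C_eq.
  - exact (is_derive_comp (K := R_AbsRing) (V := C_R_NormedModule) F _ t l c H Hg).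
  - apply scal_R_Cmult.
Qed.

Lemma is_derive_comp_opp (F : R -> C) (t : R) (l : C) :
  is_derive F (- t) l -> is_derive (fun s => F (- s)) t (Copp l).
Proof.
  intros H. apply (is_derive_ext (fun s => F (-1 * s + 0))); [intros; f_equal; ring|].
  eapply is_derive_C_eq; [apply is_derive_affine; replace (-1 * t + 0) with (- t) by ring; exact H|ring].
Qed.

Lemma is_derive_comp_shift (F : R -> C) (s t : R) (l : C) :
  is_derive F (s + t) l -> is_derive (fun u => F (s + u)) t l.
Proof.
  intros H. apply (is_derive_ext (fun u => F (1 * u + s))); [intros; f_equal; ring|].
  eapply is_derive_C_eq; [apply is_derive_affine; replace (1 * t + s) with (s + t) by ring; exact H|ring].
Qed.

Definition cderivable (f : R -> C) := forall t : R, exists l : C, is_derive f t l.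

Lemma cderivable_continuous (f : R -> C) (t : R) :
  cderivable f -> @continuous R_UniformSpace C_UniformSpace f t.
Proof. intros H. apply (ex_derive_continuous (V := C_R_NormedModule)), H. Qed.

Lemma cderivable_const (c : C) : cderivable (fun _ => c).
Proof. intros t. eexists. apply is_derive_Cconst. Qed.

Lemma cderivable_RtoC_id : cderivable (fun t => RtoC t).
Proof. intros t. eexists. apply is_derive_RtoC_id. Qed.

Lemma cderivable_minus (f g : R -> C) :
  cderivable f -> cderivable g -> cderivable (fun t => Cminus (f t) (g t)).
Proof. intros Hf Hg t. destruct (Hf t), (Hg t). eexists. apply is_derive_Cminus; eauto. Qed.

Lemma cderivable_mult (f g : R -> C) :
  cderivable f -> cderivable g -> cderivable (fun t => Cmult (f t) (g t)).
Proof. intros Hf Hg t. destruct (Hf t), (Hg t). eexists. apply is_derive_Cmult; eauto. Qed.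

Lemma cderivable_div (f g : R -> C) :
  cderivable f -> cderivable g -> (forall t, g t <> 0%C) -> cderivable (fun t => Cdiv (f t) (g t)).
Proof.
  intros Hf Hg Hnz. apply cderivable_mult; [exact Hf|].
  intros t. destruct (Hg t). eexists. apply is_derive_Cinv; eauto.
Qed.

Lemma cderivable_pow (f : R -> C) (n : nat) : cderivable f -> cderivable (fun t => Cpow (f t) n).
Proof.
  intros H. induction n; simpl; [apply cderivable_const|now apply cderivable_mult].
Qed.

Lemma cderivable_cexp (f : R -> C) : cderivable f -> cderivable (fun t => cexp (f t)).
Proof. intros H t. destruct (H t). eexists. apply is_derive_cexp; eauto. Qed.

Lemma cderivable_ext (f g : R -> C) : (forall t, f t = g t) -> cderivable f -> cderivable g.
Proof. intros E H t. destruct (H t) as [l Hl]. exists l. now apply (is_derive_ext f g). Qed.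

Notation ex_cRInt := (@ex_RInt C_R_NormedModule).
Notation is_cRInt := (@is_RInt C_R_NormedModule).

Lemma ex_cRInt_cderivable (f : R -> C) (a b : R) : cderivable f -> ex_cRInt f a b.
Proof.
  intros H. apply (ex_RInt_continuous (V := C_R_CompleteNormedModule)).
  intros z _. now apply cderivable_continuous.
Qed.

Lemma cRInt_ext (f g : R -> C) (a b : R) : (forall t, f t = g t) -> cRInt f a b = cRInt g a b.
Proof. intros H. apply (RInt_ext (V := C_R_CompleteNormedModule)). intros; apply H. Qed.

Lemma cRInt_plus (f g : R -> C) (a b : R) : ex_cRInt f a b -> ex_cRInt g a b ->
  cRInt (fun t => Cplus (f t) (g t)) a b = Cplus (cRInt f a b) (cRInt g a b).
Proof. apply (RInt_plus (V := C_R_CompleteNormedModule)). Qed.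

Lemma cRInt_minus (f g : R -> C) (a b : R) : ex_cRInt f a b -> ex_cRInt g a b ->
  cRInt (fun t => Cminus (f t) (g t)) a b = Cminus (cRInt f a b) (cRInt g a b).
Proof. apply (RInt_minus (V := C_R_CompleteNormedModule)). Qed.

Lemma is_cRInt_Cscal (f : R -> C) (a b : R) (c l : C) :
  is_cRInt f a b l -> is_cRInt (fun t => Cmult c (f t)) a b (Cmult c l).
Proof.
  intros H.
  pose proof (is_RInt_fct_extend_fst (U := R_NormedModule) (V := R_NormedModule) f a b l H) as H1.
  pose proof (is_RInt_fct_extend_snd (U := R_NormedModule) (V := R_NormedModule) f a b l H) as H2.
  apply (is_RInt_ext (V := C_R_NormedModule)
    (fun t => (fst c * fst (f t) - snd c * snd (f t), fst c * snd (f t) + snd c * fst (f t)))).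
  { intros t _. now destruct c, (f t). }
  replace (Cmult c l) with ((fst c * fst l - snd c * snd l, fst c * snd l + snd c * fst l) : C)
    by now destruct c, l.
  apply (is_RInt_fct_extend_pair (U := R_NormedModule) (V := R_NormedModule)); simpl.
  - apply (is_RInt_minus (V := R_NormedModule)); apply (is_RInt_scal (V := R_NormedModule)); assumption.
  - apply (is_RInt_plus (V := R_NormedModule)); apply (is_RInt_scal (V := R_NormedModule)); assumption.
Qed.

Lemma ex_cRInt_Cscal (f : R -> C) (a b : R) (c : C) :
  ex_cRInt f a b -> ex_cRInt (fun t => Cmult c (f t)) a b.
Proof. intros [l H]. exists (Cmult c l). now apply is_cRInt_Cscal. Qed.

Lemma cRInt_Cscal (f : R -> C) (a b : R) (c : C) : ex_cRInt f a b ->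
  cRInt (fun t => Cmult c (f t)) a b = Cmult c (cRInt f a b).
Proof.
  intros H. apply (is_RInt_unique (V := C_R_CompleteNormedModule)), is_cRInt_Cscal.
  now apply (RInt_correct (V := C_R_CompleteNormedModule)).
Qed.

Lemma cRInt_const (c : C) (a b : R) : cRInt (fun _ => c) a b = Cmult (RtoC (b - a)) c.
Proof. unfold cRInt. rewrite (RInt_const (V := C_R_CompleteNormedModule)). apply scal_R_Cmult. Qed.

Lemma Cmod_cRInt_le (f : R -> C) (b M : R) : 0 <= b -> ex_cRInt f 0 b ->
  (forall t, 0 <= t <= b -> Cmod (f t) <= M) -> Cmod (cRInt f 0 b) <= b * M.
Proof.
  intros Hb Hf HM. rewrite Cmod_norm.
  replace (b * M) with (scal (b - 0) M) by (rewrite Rminus_0_r; reflexivity).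
  apply (norm_RInt_le (V := C_R_NormedModule) f (fun _ => M) 0 b); [exact Hb| | |].
  - intros t Ht. rewrite <- Cmod_norm. now apply HM.
  - now apply (RInt_correct (V := C_R_CompleteNormedModule)).
  - apply (is_RInt_const (V := R_NormedModule)).
Qed.

Notation csum := (@sum_n_m C_AbelianMonoid).

Definition kronecker (a c : nat) : C := if Nat.eqb a c then RtoC 1 else RtoC 0.

Lemma csum_Sm (f : nat -> C) (n m : nat) : (n <= S m)%nat ->
  csum f n (S m) = Cplus (csum f n m) (f (S m)).
Proof. apply (sum_n_Sm (G := C_AbelianMonoid)). Qed.

Lemma csum_Sn (f : nat -> C) (n m : nat) : (n <= m)%nat -> csum f n m = Cplus (f n) (csum f (S n) m).
Proof. apply (sum_Sn_m (G := C_AbelianMonoid)). Qed.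

Lemma csum_empty (f : nat -> C) (n m : nat) : (m < n)%nat -> csum f n m = RtoC 0.
Proof. apply (sum_n_m_zero (G := C_AbelianMonoid)). Qed.

Lemma csum_single (f : nat -> C) (n : nat) : csum f n n = f n.
Proof. apply (sum_n_n (G := C_AbelianMonoid)). Qed.

Lemma csum_ext (f g : nat -> C) (n m : nat) :
  (forall i, (n <= i <= m)%nat -> f i = g i) -> csum f n m = csum g n m.
Proof. apply (sum_n_m_ext_loc (G := C_AbelianMonoid)). Qed.

Lemma csum_plus (f g : nat -> C) (n m : nat) :
  csum (fun i => Cplus (f i) (g i)) n m = Cplus (csum f n m) (csum g n m).
Proof. apply (sum_n_m_plus (G := C_AbelianMonoid)). Qed.

Lemma csum_Cscal (c : C) (f : nat -> C) (n m : nat) :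
  csum (fun i => Cmult c (f i)) n m = Cmult c (csum f n m).
Proof. apply (sum_n_m_mult_l (K := C_Ring)). Qed.

Lemma csum_zero (n m : nat) : csum (fun _ => RtoC 0) n m = RtoC 0.
Proof. apply (sum_n_m_const_zero (G := C_AbelianMonoid)). Qed.

Lemma csum_kronecker (a : nat -> C) (r j : nat) : (r <= j)%nat ->
  csum (fun i => Cmult (a i) (kronecker i j)) r j = a j.
Proof.
  intros H. unfold kronecker. destruct (Nat.eq_dec r j) as [<-|Hne].
  - rewrite csum_single, Nat.eqb_refl. apply Cmult_1_r.
  - destruct j as [|j]; [lia|]. rewrite csum_Sm, Nat.eqb_refl by lia.
    rewrite (csum_ext _ (fun _ => RtoC 0)), csum_zero, Cmult_1_r; [apply Cplus_0_l|].
    intros i Hi. destruct (Nat.eqb_spec i (S j)); [lia|apply Cmult_0_r].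
Qed.

Lemma is_derive_csum (F : nat -> R -> C) (dF : nat -> C) (n m : nat) (t : R) :
  (forall i, (n <= i <= m)%nat -> is_derive (F i) t (dF i)) ->
  is_derive (fun s => csum (fun i => F i s) n m) t (csum dF n m).
Proof.
  intros H. destruct (Compare_dec.le_lt_dec n m) as [Hl|Hl].
  - induction Hl.
    + apply (is_derive_ext (F n)); [intros; now rewrite csum_single|].
      rewrite csum_single. apply H; lia.
    + apply (is_derive_ext (fun s => Cplus (csum (fun i => F i s) n m) (F (S m) s))).
      { intros s. now rewrite csum_Sm by lia. }
      rewrite csum_Sm by lia. apply is_derive_Cplus; [apply IHHl; intros; apply H|apply H]; lia.
  - apply (is_derive_ext (fun _ : R => RtoC 0)); [intros; now rewrite csum_empty|].
    rewrite csum_empty by exact Hl. apply is_derive_Cconst.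
Qed.

Lemma cderivable_csum (F : nat -> R -> C) (n m : nat) :
  (forall i, cderivable (F i)) -> cderivable (fun t => csum (fun i => F i t) n m).
Proof.
  intros H. destruct (Compare_dec.le_lt_dec n m) as [Hl|Hl].
  - induction Hl as [|m Hl IH].
    + intros t. destruct (H n t) as [l Hd]. exists l.
      apply (is_derive_ext (F n)); [intros; now rewrite csum_single|exact Hd].
    + intros t. destruct (IH t) as [l1 H1], (H (S m) t) as [l2 H2]. exists (Cplus l1 l2).
      apply (is_derive_ext (fun s => Cplus (csum (fun i => F i s) n m) (F (S m) s))).
      { intros s. now rewrite csum_Sm by lia. }
      now apply is_derive_Cplus.
  - intros t. exists (RtoC 0).
    apply (is_derive_ext (fun _ : R => RtoC 0)); [intros; now rewrite csum_empty|apply is_derive_Cconst].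
Qed.

Lemma cRInt_csum (F : nat -> R -> C) (n m : nat) (a b : R) :
  (forall i, cderivable (F i)) ->
  cRInt (fun s => csum (fun i => F i s) n m) a b = csum (fun i => cRInt (F i) a b) n m.
Proof.
  intros H. destruct (Compare_dec.le_lt_dec n m) as [Hl|Hl].
  - induction Hl as [|m Hl IH].
    + rewrite csum_single. apply cRInt_ext. intros; apply csum_single.
    + rewrite csum_Sm, <- IH by lia.
      rewrite <- cRInt_plus.
      * apply cRInt_ext. intros; apply csum_Sm; lia.
      * apply ex_cRInt_cderivable, cderivable_csum, H.
      * apply ex_cRInt_cderivable, H.
  - rewrite csum_empty by exact Hl.
    rewrite (cRInt_ext _ (fun _ => RtoC 0)), cRInt_const.
    + apply Cmult_0_r.
    + intros; now rewrite csum_empty.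
Qed.

(** * The complex exponential and linear differential equations *)

Lemma cexp_add (a b : C) : cexp (Cplus a b) = Cmult (cexp a) (cexp b).
Proof.
  unfold cexp. destruct a as [a1 a2], b as [b1 b2]; simpl.
  rewrite exp_plus, cos_plus, sin_plus. apply injective_projections; simpl; ring.
Qed.

Lemma cexp_0 : cexp (RtoC 0) = RtoC 1.
Proof. unfold cexp; simpl. rewrite exp_0, cos_0, sin_0. apply injective_projections; simpl; ring. Qed.

Lemma Cmod_cexp (w : C) : Cmod (cexp w) = exp (fst w).
Proof.
  destruct w as [a b]. unfold cexp, Cmod, Re, Im; simpl.
  replace ((exp a * cos b) * ((exp a * cos b) * 1) + (exp a * sin b) * ((exp a * sin b) * 1))
    with (exp a ^ 2) by (pose proof (sin2_cos2 b) as Hs; unfold Rsqr in Hs; nra).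
  apply sqrt_pow2, Rlt_le, exp_pos.
Qed.

Lemma cexp_neq_0 (w : C) : cexp w <> 0%C.
Proof.
  intros E. pose proof (exp_pos (fst w)) as Hp.
  rewrite <- Cmod_cexp, E, Cmod_0 in Hp. lra.
Qed.

Lemma Rabs_fst_le_Cmod (w : C) : Rabs (fst w) <= Cmod w.
Proof. eapply Rle_trans; [apply Rmax_l|apply Rmax_Cmod]. Qed.

Lemma Rabs_snd_le_Cmod (w : C) : Rabs (snd w) <= Cmod w.
Proof. eapply Rle_trans; [apply Rmax_r|apply Rmax_Cmod]. Qed.

Lemma Cmod_le_Rabs_fst_snd (w : C) : Cmod w <= Rabs (fst w) + Rabs (snd w).
Proof.
  destruct w as [a b]. unfold Cmod; cbn [fst snd].
  pose proof (Rabs_pos a). pose proof (Rabs_pos b).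
  rewrite <- (sqrt_pow2 (Rabs a + Rabs b)) by lra. apply sqrt_le_1_alt.
  rewrite <- (pow2_abs a), <- (pow2_abs b). nra.
Qed.

Lemma Rabs_sin_le (b : R) : Rabs (sin b) <= Rabs b.
Proof.
  pose proof (bounded_variation sin cos 1 0 b) as H.
  rewrite sin_0, !Rminus_0_r, Rmult_1_l in H. apply H.
  intros t _. split; [auto_derive; auto; ring|]. apply Rabs_le, COS_bound.
Qed.

Lemma Rabs_cos_sub_1_le (b : R) : Rabs (cos b - 1) <= b ^ 2.
Proof.
  pose proof (bounded_variation cos (fun t => - sin t) (Rabs b) 0 b) as H.
  rewrite cos_0, !Rminus_0_r in H. rewrite <- pow2_abs. simpl; rewrite Rmult_1_r. apply H.
  intros t Ht. split; [auto_derive; auto; ring|].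
  rewrite Rabs_Ropp. eapply Rle_trans; [apply Rabs_sin_le|]. now rewrite Rminus_0_r in Ht.
Qed.

Lemma Rabs_sin_sub_le (b : R) : Rabs (sin b - b) <= Rabs b ^ 3.
Proof.
  pose proof (bounded_variation (fun t => sin t - t) (fun t => cos t - 1) (Rabs b ^ 2) 0 b) as H.
  cbv beta in H. rewrite sin_0, !Rminus_0_r in H.
  replace (Rabs b ^ 3) with (Rabs b ^ 2 * Rabs b) by ring. apply H.
  intros t Ht. split; [auto_derive; auto; ring|]. eapply Rle_trans; [apply Rabs_cos_sub_1_le|].
  rewrite <- (pow2_abs t). apply pow_incr. split; [apply Rabs_pos|now rewrite Rminus_0_r in Ht].
Qed.

Lemma exp_sub_1_bounds (a : R) : Rabs a <= 1/2 ->
  Rabs (exp a - 1 - a) <= 2 * a ^ 2 /\ Rabs (exp a - 1) <= 2 * Rabs a.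
Proof.
  intros Ha. apply Rabs_le_between in Ha.
  pose proof (exp_ineq1_le a). pose proof (exp_ineq1_le (- a)).
  assert (He : exp a * exp (- a) = 1) by (rewrite <- exp_plus, Rplus_opp_r; apply exp_0).
  pose proof (exp_pos a). pose proof (exp_pos (- a)).
  split; [rewrite Rabs_pos_eq by lra; nra|].
  destruct (Rle_dec 0 a).
  - rewrite Rabs_pos_eq, (Rabs_pos_eq a) by lra. nra.
  - rewrite Rabs_left1, (Rabs_left1 a) by nra. nra.
Qed.

Lemma Cmod_cexp_taylor1_le (w : C) : Cmod w <= 1/2 ->
  Cmod (Cminus (Cminus (cexp w) (RtoC 1)) w) <= 8 * Cmod w ^ 2.
Proof.
  intros Hw. pose proof (Rabs_fst_le_Cmod w) as Ha. pose proof (Rabs_snd_le_Cmod w) as Hb.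
  destruct w as [a b]; simpl in Ha, Hb. set (r := Cmod (a, b)) in *.
  destruct (exp_sub_1_bounds a) as [E1 E2]; [lra|].
  pose proof (Rabs_cos_sub_1_le b). pose proof (Rabs_sin_sub_le b). pose proof (Rabs_sin_le b).
  pose proof (COS_bound b). pose proof (Rabs_pos a). pose proof (Rabs_pos b).
  assert (Hra : a ^ 2 <= r ^ 2) by (rewrite <- (pow2_abs a); apply pow_incr; lra).
  assert (Hrb : b ^ 2 <= r ^ 2) by (rewrite <- (pow2_abs b); apply pow_incr; lra).
  eapply Rle_trans; [apply Cmod_le_Rabs_fst_snd|].
  unfold cexp, Cminus, Cplus, Copp, RtoC, Re, Im; cbn [fst snd].
  replace (exp a * cos b + Ropp 1 + - a) with ((exp a - 1 - a) * cos b + (1 + a) * (cos b - 1)) by ring.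
  replace (exp a * sin b + Ropp 0 + - b) with ((exp a - 1) * sin b + (sin b - b)) by ring.
  assert (A1 : Rabs ((exp a - 1 - a) * cos b) <= 2 * r ^ 2).
  { rewrite Rabs_mult. assert (Rabs (cos b) <= 1) by (apply Rabs_le; lra).
    pose proof (Rabs_pos (cos b)). pose proof (Rabs_pos (exp a - 1 - a)). nra. }
  assert (A2 : Rabs ((1 + a) * (cos b - 1)) <= 2 * r ^ 2).
  { rewrite Rabs_mult. assert (Rabs (1 + a) <= 2) by (apply Rabs_le; apply Rabs_le_between in Ha; lra).
    pose proof (Rabs_pos (1 + a)). pose proof (Rabs_pos (cos b - 1)). nra. }
  assert (A3 : Rabs ((exp a - 1) * sin b) <= 2 * r ^ 2).
  { rewrite Rabs_mult. pose proof (Rabs_pos (sin b)). pose proof (Rabs_pos (exp a - 1)). nra. }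
  assert (A4 : Rabs (sin b - b) <= r ^ 2).
  { assert (Rabs b ^ 3 <= r ^ 3) by (apply pow_incr; lra). nra. }
  pose proof (Rabs_triang ((exp a - 1 - a) * cos b) ((1 + a) * (cos b - 1))).
  pose proof (Rabs_triang ((exp a - 1) * sin b) (sin b - b)). pose proof (pow2_ge_0 r). lra.
Qed.

Lemma Cmod_cexp_scal_le (t rho : R) (w : C) : Cmod w <= rho ->
  Cmod (cexp (Cmult (RtoC t) w)) <= exp (Rabs t * rho).
Proof.
  intros Hw. rewrite Cmod_cexp.
  assert (Hle : fst (Cmult (RtoC t) w) <= Rabs t * rho).
  { simpl. rewrite Rmult_0_l, Rminus_0_r. pose proof (Rabs_fst_le_Cmod w). pose proof (Rabs_pos t).
    eapply Rle_trans; [apply Rle_abs|]. rewrite Rabs_mult. apply Rmult_le_compat_l; lra. }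
  destruct Hle as [Hlt|Heq]; [left; now apply exp_increasing|right; now rewrite Heq].
Qed.

Lemma is_derive_0_const (f : R -> R) : (forall t, is_derive f t 0) -> forall t, f t = f 0.
Proof.
  intros H t. pose proof (bounded_variation f (fun _ => 0) 0 0 t) as Hb.
  assert (Rabs (f t - f 0) <= 0) as Hle.
  { eapply Rle_trans; [apply Hb|rewrite Rmult_0_l; apply Rle_refl].
    intros s _. rewrite Rabs_R0. split; [apply H|lra]. }
  pose proof (Rabs_pos (f t - f 0)). apply Rminus_diag_uniq, Rabs_eq_0. lra.
Qed.

Lemma linear_ode_zero (y : C) (u : R -> C) :
  (forall t, is_derive u t (Cmult y (u t))) -> u 0 = 0%C -> forall t, u t = 0%C.
Proof.
  intros Hd H0 t.
  set (v := fun s => Cmult (cexp (Cmult (RtoC s) (Copp y))) (u s)).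
  assert (Dv : forall s, is_derive v s (RtoC 0)).
  { intros s. eapply is_derive_C_eq; [apply is_derive_Cmult; [|apply Hd]|].
    - apply is_derive_cexp, is_derive_Cmult; [apply is_derive_RtoC_id|apply is_derive_Cconst].
    - cbv beta; ring. }
  assert (Hv : forall s, v s = v 0).
  { intros s. apply injective_projections;
      [apply (is_derive_0_const (fun r => fst (v r)))|apply (is_derive_0_const (fun r => snd (v r)))];
      intros r; [apply (is_derive_fst _ _ _ (Dv r))|apply (is_derive_snd _ _ _ (Dv r))]. }
  assert (E : u t = Cmult (cexp (Cmult (RtoC t) y)) (v t)).
  { unfold v. rewrite Cmult_assoc, <- cexp_add.
    replace (Cplus (Cmult (RtoC t) y) (Cmult (RtoC t) (Copp y))) with (RtoC 0) by ring.
    rewrite cexp_0. ring. }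
  rewrite E, Hv. unfold v. rewrite H0. ring.
Qed.

Lemma linear_ode_unique (y : C) (f g h : R -> C) :
  (forall t, is_derive f t (Cplus (Cmult y (f t)) (h t))) ->
  (forall t, is_derive g t (Cplus (Cmult y (g t)) (h t))) ->
  f 0 = g 0 -> forall t, f t = g t.
Proof.
  intros Hf Hg H0 t. apply Ceq_minus. revert t. apply linear_ode_zero with y.
  - intros t. eapply is_derive_C_eq; [apply is_derive_Cminus; [apply Hf|apply Hg]|]. ring.
  - rewrite H0. ring.
Qed.

(** * Differentiation under the integral sign *)

Lemma is_derive_of_remainder_le {V : NormedModule R_AbsRing} (f : R -> V) (t : R) (l : V) (K d : R) :
  0 < d ->
  (forall u, Rabs u <= d -> norm (minus (minus (f (t + u)) (f t)) (scal u l)) <= K * u ^ 2) ->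
  is_derive f t l.
Proof.
  intros Hd Hrem. split; [apply is_linear_scal_l|].
  intros y Hy. apply (is_filter_lim_locally_unique (K := R_AbsRing) (V := R_NormedModule)) in Hy.
  subst y. intros eps. pose proof (cond_pos eps) as Heps. pose proof (Rabs_pos K).
  assert (Hdelta : 0 < Rmin d (eps / (Rabs K + 1))).
  { apply Rmin_pos; [exact Hd|apply Rdiv_lt_0_compat; lra]. }
  exists (mkposreal _ Hdelta). intros y Hy.
  change (Rabs (y - t) < Rmin d (eps / (Rabs K + 1))) in Hy.
  pose proof (Rmin_l d (eps / (Rabs K + 1))). pose proof (Rmin_r d (eps / (Rabs K + 1))).
  change (norm (minus y t)) with (Rabs (y - t)). change (minus y t) with (y - t).
  replace y with (t + (y - t)) at 1 by ring. set (u := y - t) in *.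
  eapply Rle_trans; [apply Hrem; lra|]. pose proof (Rabs_pos u).
  assert (Rabs K * Rabs u <= eps).
  { apply Rle_trans with (Rabs K * (eps / (Rabs K + 1))); [apply Rmult_le_compat_l; lra|].
    apply Rmult_le_reg_r with (Rabs K + 1); [lra|]. field_simplify; nra. }
  rewrite <- (pow2_abs u). pose proof (Rle_abs K). nra.
Qed.

Section DerivUnderIntegral.

Variables (h w : R -> C) (L Hb rho : R).
Hypotheses (HL : 0 <= L) (Hrho : 0 <= rho) (Dh : cderivable h) (Dw : cderivable w)
  (Hh : forall th, Cmod (h th) <= Hb) (Hw : forall th, Cmod (w th) <= rho).

Let g (t th : R) : C := Cmult (h th) (cexp (Cmult (RtoC t) (w th))).
Let k (t th : R) : C := Cmult (Cmult (h th) (w th)) (cexp (Cmult (RtoC t) (w th))).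

Let cderivable_scal_w (c : C) : cderivable (fun th => Cmult c (w th)).
Proof. apply cderivable_mult; [apply cderivable_const|exact Dw]. Qed.

Let cderivable_g (t : R) : cderivable (g t).
Proof. apply cderivable_mult; [exact Dh|apply cderivable_cexp, cderivable_scal_w]. Qed.

Let ex_cRInt_g (t : R) : ex_cRInt (g t) 0 L.
Proof. apply ex_cRInt_cderivable, cderivable_g. Qed.

Let ex_cRInt_k (t : R) : ex_cRInt (k t) 0 L.
Proof.
  apply ex_cRInt_cderivable, cderivable_mult; [now apply cderivable_mult|].
  apply cderivable_cexp, cderivable_scal_w.
Qed.

Lemma is_derive_cRInt_cexp (t0 : R) :
  is_derive (fun t => cRInt (g t) 0 L) t0 (cRInt (k t0) 0 L).
Proof.
  apply (is_derive_of_remainder_le _ t0 _ (L * (Hb * exp (Rabs t0 * rho) * (8 * rho ^ 2)))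
    (/ (2 * rho + 1))); [apply Rinv_0_lt_compat; lra|].
  intros u Hu.
  assert (Hur : Rabs u * rho <= 1/2).
  { apply Rle_trans with (/ (2 * rho + 1) * rho); [apply Rmult_le_compat_r; lra|].
    apply Rmult_le_reg_r with (2 * rho + 1); [lra|]. field_simplify; lra. }
  assert (Eq : minus (minus (cRInt (g (t0 + u)) 0 L) (cRInt (g t0) 0 L)) (scal u (cRInt (k t0) 0 L)) =
    cRInt (fun th => Cmult (g t0 th)
      (Cminus (Cminus (cexp (Cmult (RtoC u) (w th))) (RtoC 1)) (Cmult (RtoC u) (w th)))) 0 L).
  { transitivity
      (cRInt (fun th => Cminus (Cminus (g (t0 + u) th) (g t0 th)) (Cmult (RtoC u) (k t0 th))) 0 L).
    - assert (ex_cRInt (fun th => Cminus (g (t0 + u) th) (g t0 th)) 0 L)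
        by now apply (ex_RInt_minus (V := C_R_NormedModule)).
      rewrite scal_R_Cmult, cRInt_minus, cRInt_minus, cRInt_Cscal
        by auto using ex_cRInt_g, ex_cRInt_k, ex_cRInt_Cscal.
      reflexivity.
    - apply cRInt_ext. intros th. unfold g, k. rewrite RtoC_plus, Cmult_plus_distr_r, cexp_add. ring. }
  eapply Rle_trans; [apply Req_le, (f_equal norm), Eq|]. rewrite <- Cmod_norm.
  eapply Rle_trans.
  { apply (Cmod_cRInt_le _ L (Hb * exp (Rabs t0 * rho) * (8 * (Rabs u * rho) ^ 2))); [exact HL| |].
    - apply ex_cRInt_cderivable, cderivable_mult; [apply cderivable_g|].
      apply cderivable_minus; [|apply cderivable_scal_w].
      apply cderivable_minus; [apply cderivable_cexp, cderivable_scal_w|apply cderivable_const].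
    - intros th _. unfold g. rewrite !Cmod_mult.
      assert (Hwu : Cmod (Cmult (RtoC u) (w th)) <= Rabs u * rho).
      { rewrite Cmod_mult, Cmod_R. apply Rmult_le_compat_l; [apply Rabs_pos|apply Hw]. }
      apply Rmult_le_compat; [apply Rmult_le_pos; apply Cmod_ge_0|apply Cmod_ge_0| |].
      + apply Rmult_le_compat; [apply Cmod_ge_0|apply Cmod_ge_0|apply Hh|now apply Cmod_cexp_scal_le].
      + eapply Rle_trans; [apply Cmod_cexp_taylor1_le; lra|].
        apply Rmult_le_compat_l; [lra|]. apply pow_incr. split; [apply Cmod_ge_0|exact Hwu]. }
  apply Req_le. rewrite <- (pow2_abs u). ring.
Qed.

End DerivUnderIntegral.

(** * Integrals over a circle *)

Definition circle (rho th : R) : C := Cmult (RtoC rho) (cexp (0, th)).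

Definition node_poly (S : list C) (z : C) : C := cprod (map (fun y => Cminus z y) S).

Definition encloses (rho : R) (S : list C) := 0 < rho /\ List.Forall (fun y => Cmod y < rho) S.

Definition node_poly_lb (S : list C) (rho : R) : R := fold_right (fun y p => (rho - Cmod y) * p) 1 S.

Lemma PI2_pos : 0 < 2 * PI.
Proof. pose proof PI_RGT_0. lra. Qed.

Lemma cis_pow (th : R) (n : nat) : Cpow (cexp (0, th)) n = cexp (0, INR n * th).
Proof.
  induction n as [|n IH].
  - rewrite Rmult_0_l. symmetry. apply cexp_0.
  - simpl Cpow. rewrite IH, <- cexp_add, S_INR. f_equal. apply injective_projections; simpl; ring.
Qed.

Lemma cderivable_cis (m : R) : cderivable (fun th => cexp (0, m * th)).
Proof.
  apply cderivable_cexp. intros t. exists (0, m).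
  apply is_derive_C_components; simpl; [apply (is_derive_const (V := R_NormedModule))|].
  auto_derive; auto; ring.
Qed.

Lemma cRInt_cis (m : R) : m <> 0 -> sin (m * (2 * PI)) = 0 -> cos (m * (2 * PI)) = 1 ->
  cRInt (fun th => cexp (0, m * th)) 0 (2 * PI) = 0%C.
Proof.
  intros Hm Hs Hc. apply (is_RInt_unique (V := C_R_CompleteNormedModule)).
  set (F := fun th : R => ((sin (m * th) / m, - cos (m * th) / m) : C)).
  assert (HF : minus (F (2 * PI)) (F 0) = RtoC 0).
  { unfold F. rewrite Hs, Hc, Rmult_0_r, sin_0, cos_0.
    apply injective_projections; simpl; field; auto. }
  rewrite <- HF.
  apply (is_RInt_derive (V := C_R_CompleteNormedModule)).
  - intros th _. unfold F, cexp. apply is_derive_C_components; simpl; rewrite exp_0;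
      auto_derive; auto; field; auto.
  - intros th _. apply cderivable_continuous, cderivable_cis.
Qed.

Lemma circle_Cmod (rho th : R) : 0 <= rho -> Cmod (circle rho th) = rho.
Proof.
  intros H. unfold circle. rewrite Cmod_mult, Cmod_cexp, Cmod_R. simpl. rewrite exp_0, Rabs_pos_eq; lra.
Qed.

Lemma circle_neq_0 (rho th : R) : 0 < rho -> circle rho th <> 0%C.
Proof. intros H E. pose proof (circle_Cmod rho th). rewrite E, Cmod_0 in H0. lra. Qed.

Lemma circle_pow (rho th : R) (n : nat) :
  Cpow (circle rho th) n = Cmult (RtoC (rho ^ n)) (cexp (0, INR n * th)).
Proof. unfold circle. now rewrite Cpow_mult_l, cis_pow, RtoC_pow. Qed.

Lemma cderivable_circle (rho : R) : cderivable (circle rho).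
Proof.
  apply cderivable_mult; [apply cderivable_const|].
  apply (cderivable_ext (fun th => cexp (0, 1 * th))); [intros; now rewrite Rmult_1_l|apply cderivable_cis].
Qed.

Lemma cderivable_node_poly (S : list C) (f : R -> C) :
  cderivable f -> cderivable (fun t => node_poly S (f t)).
Proof.
  intros H. induction S as [|y S IH]; unfold node_poly; simpl; [apply cderivable_const|].
  apply cderivable_mult; [apply cderivable_minus; [exact H|apply cderivable_const]|exact IH].
Qed.

Lemma node_poly_perm (S1 S2 : list C) (z : C) : Permutation S1 S2 -> node_poly S1 z = node_poly S2 z.
Proof.
  intros H. unfold node_poly. induction H; simpl; [reflexivity|now rewrite IHPermutation|ring|congruence].
Qed.

Lemma encloses_perm (rho : R) (S1 S2 : list C) : Permutation S1 S2 -> encloses rho S1 -> encloses rho S2.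
Proof.
  intros HP [H0 H]. split; [exact H0|]. rewrite Forall_forall in *.
  intros y Hy. apply H. now apply Permutation_in with S2; [apply Permutation_sym|].
Qed.

Lemma encloses_app_r (rho : R) (M S : list C) : encloses rho (M ++ S) -> encloses rho S.
Proof. intros [H0 H]. split; [exact H0|]. now apply Forall_app in H. Qed.

Lemma encloses_cons (rho : R) (y : C) (S : list C) : encloses rho (y :: S) -> encloses rho S.
Proof. apply (encloses_app_r rho (y :: nil)). Qed.

Lemma node_poly_lb_pos (S : list C) (rho : R) : encloses rho S -> 0 < node_poly_lb S rho.
Proof. intros [H0 H]. induction H; simpl; [lra|]. apply Rmult_lt_0_compat; [lra|assumption]. Qed.

Lemma Cmod_node_poly_ge (S : list C) (rho : R) (z : C) :
  encloses rho S -> Cmod z = rho -> node_poly_lb S rho <= Cmod (node_poly S z).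
Proof.
  intros [H0 H] Hz. induction H as [|y S Hy HS IH]; unfold node_poly; simpl.
  - rewrite Cmod_1. lra.
  - rewrite Cmod_mult. apply Rmult_le_compat; [lra|now apply Rlt_le, node_poly_lb_pos| |exact IH].
    pose proof (Cmod_triangle (Cminus z y) y) as Ht.
    replace (Cplus (Cminus z y) y) with z in Ht by ring. lra.
Qed.

Lemma node_poly_neq_0 (S : list C) (rho : R) (z : C) :
  encloses rho S -> Cmod z = rho -> node_poly S z <> 0%C.
Proof.
  intros Hv Hz E. pose proof (Cmod_node_poly_ge S rho z Hv Hz) as H. pose proof (node_poly_lb_pos S rho Hv).
  rewrite E, Cmod_0 in H. lra.
Qed.

Lemma node_poly_circle_neq_0 (S : list C) (rho th : R) :
  encloses rho S -> node_poly S (circle rho th) <> 0%C.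
Proof. intros Hv. apply (node_poly_neq_0 S rho); [exact Hv|apply circle_Cmod; destruct Hv; lra]. Qed.

Lemma node_poly_cons (y : C) (S : list C) (z : C) :
  node_poly (y :: S) z = Cmult (Cminus z y) (node_poly S z).
Proof. reflexivity. Qed.

Lemma circle_sub_neq_0 (y : C) (S : list C) (rho th : R) :
  encloses rho (y :: S) -> Cminus (circle rho th) y <> 0%C.
Proof.
  intros Hv E. apply (node_poly_circle_neq_0 _ _ th Hv). rewrite node_poly_cons, E. ring.
Qed.

Lemma le_0_of_le_geometric (d c q : R) : 0 <= q < 1 -> (forall K, (1 <= K)%nat -> d <= c * q ^ K) -> d <= 0.
Proof.
  intros Hq H. destruct (Rle_dec d 0) as [|Hd]; [assumption|exfalso]. apply Rnot_le_lt in Hd.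
  destruct (Rle_dec c 0) as [Hc|Hc].
  { specialize (H 1%nat (le_n 1)). simpl in H. nra. }
  apply Rnot_le_lt in Hc.
  destruct (pow_lt_1_zero q) with (y := d / c) as [N HN];
    [rewrite Rabs_pos_eq; lra|apply Rdiv_lt_0_compat; lra|].
  specialize (HN (S N) (le_S _ _ (le_n N))). specialize (H (S N) ltac:(lia)).
  rewrite Rabs_pos_eq in HN by (apply pow_le; lra).
  apply (Rmult_lt_compat_l c) in HN; [|exact Hc]. field_simplify in HN; lra.
Qed.

Section CircleMean.

Variable rho : R.

Definition circle_mean_integrand (L : list C) (a b : nat) (th : R) : C :=
  let z := circle rho th in Cdiv (Cpow z a) (Cmult (Cpow z b) (node_poly L z)).

Definition circle_mean (L : list C) (a b : nat) : C :=
  Cmult (RtoC (/ (2 * PI))) (cRInt (circle_mean_integrand L a b) 0 (2 * PI)).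

Lemma cderivable_circle_mean_integrand (L : list C) (a b : nat) : encloses rho L ->
  cderivable (circle_mean_integrand L a b).
Proof.
  intros Hv. assert (Hr : 0 < rho) by apply Hv.
  apply cderivable_div; [apply cderivable_pow, cderivable_circle|apply cderivable_mult| ].
  - apply cderivable_pow, cderivable_circle.
  - apply cderivable_node_poly, cderivable_circle.
  - intros th. apply Cmult_neq_0; [apply Cpow_nz, circle_neq_0, Hr|now apply node_poly_circle_neq_0].
Qed.

Lemma circle_mean_nil (a b : nat) : 0 < rho -> (a <= b)%nat -> circle_mean nil a b = kronecker a b.
Proof.
  intros Hr Hab. unfold circle_mean, kronecker.
  assert (Hpow : 0 < rho ^ b) by (apply pow_lt, Hr).
  rewrite (cRInt_ext _ (fun th => Cmult (RtoC (rho ^ a / rho ^ b)) (cexp (0, (INR a - INR b) * th)))).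
  2: { intros th. unfold circle_mean_integrand. cbv zeta. rewrite !circle_pow. unfold node_poly; simpl.
       replace (cexp (0, INR a * th)) with (Cmult (cexp (0, INR b * th)) (cexp (0, (INR a - INR b) * th)))
         by (rewrite <- cexp_add; f_equal; apply injective_projections; simpl; ring).
       rewrite RtoC_div by lra.
       field; split; (apply cexp_neq_0 || (intros E; apply RtoC_inj in E; lra)). }
  rewrite cRInt_Cscal by apply ex_cRInt_cderivable, cderivable_cis.
  destruct (Nat.eqb_spec a b) as [<-|Hne].
  - rewrite (cRInt_ext _ (fun _ => RtoC 1)), cRInt_const.
    + pose proof PI2_pos. apply injective_projections; simpl; field; split; lra.
    + intros th. rewrite Rminus_diag, Rmult_0_l. apply cexp_0.
  - replace (INR a - INR b) with (- INR (b - a)) by (rewrite minus_INR by exact Hab; ring).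
    assert (Hn : INR (b - a) * (2 * PI) = 0 + 2 * INR (b - a) * PI) by ring.
    rewrite cRInt_cis; [ring| | |]; rewrite ?Ropp_mult_distr_l_reverse.
    + apply Ropp_neq_0_compat, not_0_INR. lia.
    + now rewrite sin_neg, Hn, sin_period, sin_0, Ropp_0.
    + now rewrite cos_neg, Hn, cos_period, cos_0.
Qed.

Lemma circle_mean_cons (y : C) (L : list C) (a b : nat) : encloses rho (y :: L) ->
  circle_mean (y :: L) a b = Cplus (circle_mean L a (S b)) (Cmult y (circle_mean (y :: L) a (S b))).
Proof.
  intros Hv. assert (Hr : 0 < rho) by apply Hv. pose proof (encloses_cons _ _ _ Hv) as Hv'.
  unfold circle_mean.
  rewrite Cmult_assoc, (Cmult_comm y), <- Cmult_assoc, <- Cmult_plus_distr_l.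
  pose proof (cderivable_circle_mean_integrand _ a (S b) Hv) as D1.
  pose proof (cderivable_circle_mean_integrand _ a (S b) Hv') as D2.
  rewrite <- (cRInt_Cscal (circle_mean_integrand (y :: L) a (S b))), <- cRInt_plus.
  2: now apply ex_cRInt_cderivable.
  2: now apply ex_cRInt_cderivable, cderivable_mult; [apply cderivable_const|].
  2: now apply ex_cRInt_cderivable.
  f_equal. apply cRInt_ext. intros th. unfold circle_mean_integrand. cbv zeta.
  pose proof (node_poly_circle_neq_0 _ _ th Hv') as HL. pose proof (circle_sub_neq_0 _ _ _ th Hv).
  pose proof (circle_neq_0 rho th Hr). rewrite node_poly_cons. simpl.
  field. repeat split; auto. now apply Cpow_nz.
Qed.

Lemma Cmod_circle_mean_le (L : list C) (a b : nat) : encloses rho L ->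
  Cmod (circle_mean L a b) <= rho ^ a / (rho ^ b * node_poly_lb L rho).
Proof.
  intros Hv. assert (Hr : 0 < rho) by apply Hv.
  pose proof (node_poly_lb_pos L rho Hv). pose proof PI2_pos. pose proof (pow_lt rho b Hr).
  unfold circle_mean. rewrite Cmod_mult, Cmod_R, Rabs_pos_eq by (apply Rlt_le, Rinv_0_lt_compat; lra).
  apply Rmult_le_reg_l with (2 * PI); [lra|]. rewrite <- Rmult_assoc, Rinv_r, Rmult_1_l by lra.
  apply Cmod_cRInt_le; [lra|now apply ex_cRInt_cderivable, cderivable_circle_mean_integrand|].
  intros th _. unfold circle_mean_integrand. cbv zeta.
  assert (Hz : Cmod (circle rho th) = rho) by (apply circle_Cmod; lra).
  pose proof (Cmod_node_poly_ge L rho _ Hv Hz).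
  rewrite Cmod_div, Cmod_mult, !Cmod_pow, Hz.
  - unfold Rdiv. apply Rmult_le_compat_l; [apply pow_le; lra|].
    apply Rinv_le_contravar; [nra|]. apply Rmult_le_compat_l; lra.
  - apply Cmult_neq_0; [apply Cpow_nz, circle_neq_0, Hr|now apply node_poly_circle_neq_0].
Qed.

(* With the values for [L] known, [circle_mean_cons] gives [D b = y ^ K D (b + K)] for the
   defect [D], and [Cmod_circle_mean_le] makes the right-hand side decay like (|y| / rho) ^ K. *)
Lemma circle_mean_eq (L : list C) (a b : nat) : encloses rho L -> (a <= b + length L)%nat ->
  circle_mean L a b = kronecker a (b + length L).
Proof.
  revert a b. induction L as [|y L IH]; intros a b Hv Hab.
  - rewrite Nat.add_0_r. apply circle_mean_nil; [apply Hv|simpl in Hab; lia].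
  - assert (Hr : 0 < rho) by apply Hv. pose proof (encloses_cons _ _ _ Hv) as Hv'.
    simpl length in *. set (n := length L) in *.
    set (D := fun b' => Cminus (circle_mean (y :: L) a b') (kronecker a (b' + S n))).
    assert (Step : forall b', (a <= b' + S n)%nat -> D b' = Cmult y (D (S b'))).
    { intros b' Hb'. unfold D. rewrite circle_mean_cons, (IH a (S b')) by (auto || lia).
      unfold kronecker. replace (S b' + n)%nat with (b' + S n)%nat by lia.
      destruct (Nat.eqb_spec a (S b' + S n)); [lia|ring]. }
    assert (Iter : forall K b', (a <= b' + S n)%nat -> D b' = Cmult (Cpow y K) (D (b' + K)%nat)).
    { induction K as [|K IHK]; intros b' Hb'; simpl; [rewrite Nat.add_0_r; ring|].
      rewrite Step, (IHK (S b')) by lia. replace (S b' + K)%nat with (b' + S K)%nat by lia. ring. }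
    assert (HD : D b = 0%C).
    { apply Cmod_eq_0, Rle_antisym; [|apply Cmod_ge_0].
      destruct Hv as [_ Hf]. inversion Hf as [|? ? Hy _]; subst.
      apply (le_0_of_le_geometric _ (rho ^ a / (rho ^ b * node_poly_lb (y :: L) rho)) (Cmod y / rho)).
      { split; [apply Rmult_le_pos; [apply Cmod_ge_0|apply Rlt_le, Rinv_0_lt_compat; lra]|].
        apply Rmult_lt_reg_r with rho; [lra|]. unfold Rdiv. rewrite Rmult_assoc, Rinv_l; lra. }
      intros K HK. rewrite (Iter K b Hab), Cmod_mult, Cmod_pow.
      unfold D, kronecker. destruct (Nat.eqb_spec a (b + K + S n)); [lia|].
      replace (Cminus (circle_mean (y :: L) a (b + K)) (RtoC 0)) with (circle_mean (y :: L) a (b + K))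
        by ring.
      eapply Rle_trans; [apply Rmult_le_compat_l; [apply pow_le, Cmod_ge_0|now apply Cmod_circle_mean_le]|].
      pose proof (node_poly_lb_pos (y :: L) rho (conj Hr Hf)).
      pose proof (pow_lt rho b Hr). pose proof (pow_lt rho K Hr).
      rewrite pow_add. unfold Rdiv. rewrite Rpow_mult_distr, pow_inv.
      apply Req_le. field. repeat split; lra. }
    now apply Ceq_minus.
Qed.

End CircleMean.

Section Moment.

Variable rho : R.

Definition moment_weight (L : list C) (k : nat) (th : R) : C :=
  let z := circle rho th in Cdiv (Cmult (Cpow z k) z) (node_poly L z).

Definition moment (L : list C) (k : nat) (t : R) : C :=
  Cmult (RtoC (/ (2 * PI)))
    (cRInt (fun th => Cmult (moment_weight L k th) (cexp (Cmult (RtoC t) (circle rho th)))) 0 (2 * PI)).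

Lemma cderivable_moment_weight (L : list C) (k : nat) : encloses rho L -> cderivable (moment_weight L k).
Proof.
  intros Hv. apply cderivable_div.
  - apply cderivable_mult; [apply cderivable_pow|]; apply cderivable_circle.
  - apply cderivable_node_poly, cderivable_circle.
  - intros th. now apply node_poly_circle_neq_0.
Qed.

Lemma cderivable_moment_integrand (L : list C) (k : nat) (t : R) : encloses rho L ->
  cderivable (fun th => Cmult (moment_weight L k th) (cexp (Cmult (RtoC t) (circle rho th)))).
Proof.
  intros Hv. apply cderivable_mult; [now apply cderivable_moment_weight|].
  apply cderivable_cexp, cderivable_mult; [apply cderivable_const|apply cderivable_circle].
Qed.

Lemma is_derive_moment (L : list C) (k : nat) (t : R) : encloses rho L ->
  is_derive (moment L k) t (moment L (S k) t).
Proof.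
  intros Hv. assert (Hr : 0 < rho) by apply Hv.
  assert (Hbound : forall th, Cmod (moment_weight L k th) <= rho ^ S k / node_poly_lb L rho).
  { intros th. unfold moment_weight. cbv zeta.
    assert (Hz : Cmod (circle rho th) = rho) by (apply circle_Cmod; lra).
    pose proof (Cmod_node_poly_ge L rho _ Hv Hz). pose proof (node_poly_lb_pos L rho Hv).
    rewrite Cmod_div, Cmod_mult, Cmod_pow, Hz by now apply node_poly_circle_neq_0.
    simpl. rewrite (Rmult_comm (rho ^ k) rho). unfold Rdiv.
    apply Rmult_le_compat_l; [pose proof (pow_le rho k); nra|]. now apply Rinv_le_contravar. }
  unfold moment. eapply is_derive_C_eq.
  - apply is_derive_Cscal.
    apply (is_derive_cRInt_cexp _ _ (2 * PI) (rho ^ S k / node_poly_lb L rho) rho).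
    + pose proof PI2_pos. lra.
    + lra.
    + now apply cderivable_moment_weight.
    + apply cderivable_circle.
    + exact Hbound.
    + intros th. rewrite circle_Cmod; lra.
  - f_equal. apply cRInt_ext. intros th. unfold moment_weight. cbv zeta. simpl. field.
    now apply node_poly_circle_neq_0.
Qed.

Lemma moment_cons (y : C) (L : list C) (k : nat) (t : R) : encloses rho (y :: L) ->
  Cminus (moment (y :: L) (S k) t) (Cmult y (moment (y :: L) k t)) = moment L k t.
Proof.
  intros Hv. assert (Hr : 0 < rho) by apply Hv. pose proof (encloses_cons _ _ _ Hv) as Hv'.
  unfold moment.
  match goal with |- Cminus (Cmult ?c ?A) (Cmult y (Cmult ?c ?B)) = Cmult ?c _ =>
    transitivity (Cmult c (Cminus A (Cmult y B))); [ring|f_equal] end.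
  pose proof (fun k => ex_cRInt_cderivable _ 0 (2 * PI) (cderivable_moment_integrand (y :: L) k t Hv))
    as Hint.
  rewrite <- cRInt_Cscal, <- cRInt_minus by auto using ex_cRInt_Cscal.
  apply cRInt_ext. intros th. unfold moment_weight. cbv zeta.
  pose proof (node_poly_circle_neq_0 _ _ th Hv') as HL. pose proof (circle_sub_neq_0 _ _ _ th Hv).
  rewrite node_poly_cons. simpl. field. auto.
Qed.

Lemma moment_at_0 (L : list C) (k : nat) : encloses rho L -> moment L k 0 = circle_mean rho L (S k) 0.
Proof.
  intros Hv. unfold moment, circle_mean. f_equal. apply cRInt_ext. intros th.
  unfold moment_weight, circle_mean_integrand. cbv zeta.
  replace (Cmult (RtoC 0) (circle rho th)) with (RtoC 0) by ring. rewrite cexp_0. simpl.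
  field. now apply node_poly_circle_neq_0.
Qed.

Lemma moment_perm (L1 L2 : list C) (k : nat) (t : R) : Permutation L1 L2 -> moment L1 k t = moment L2 k t.
Proof.
  intros HP. unfold moment, moment_weight. f_equal. apply cRInt_ext. intros th. cbv zeta.
  now rewrite (node_poly_perm L1 L2).
Qed.

Lemma is_derive_circle (th : R) : is_derive (circle rho) th (Cmult Ci (circle rho th)).
Proof.
  unfold circle. eapply is_derive_C_eq; [apply is_derive_Cscal, (is_derive_cexp _ _ (0, 1))|].
  - apply is_derive_C_components; simpl; [apply (is_derive_const (V := R_NormedModule))|].
    auto_derive; auto.
  - unfold Ci. ring.
Qed.

Lemma moment_nil (t : R) : 0 < rho -> moment nil 0 t = 0%C.
Proof.
  intros Hr. unfold moment.
  rewrite (cRInt_ext _ (fun th => Cmult (circle rho th) (cexp (Cmult (RtoC t) (circle rho th))))).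
  2: { intros th. unfold moment_weight, node_poly. simpl. field. }
  destruct (Req_dec t 0) as [->|Ht].
  - rewrite (cRInt_ext _ (fun th => Cmult (RtoC rho) (cexp (0, 1 * th)))).
    2: { intros th. replace (Cmult (RtoC 0) (circle rho th)) with (RtoC 0) by ring.
         rewrite cexp_0, Rmult_1_l. unfold circle. ring. }
    rewrite cRInt_Cscal by apply ex_cRInt_cderivable, cderivable_cis.
    rewrite cRInt_cis; [ring|lra|rewrite Rmult_1_l; apply sin_2PI|rewrite Rmult_1_l; apply cos_2PI].
  - set (F := fun th => Cdiv (cexp (Cmult (RtoC t) (circle rho th))) (Cmult Ci (RtoC t))).
    assert (HF : Cminus (F (2 * PI)) (F 0) = RtoC 0).
    { unfold F, circle. replace (cexp (0, 2 * PI)) with (cexp (0, 0)); [simpl; ring|].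
      unfold cexp. simpl. now rewrite cos_2PI, sin_2PI, cos_0, sin_0. }
    replace (cRInt _ 0 (2 * PI)) with (RtoC 0); [ring|].
    symmetry. rewrite <- HF. apply (is_RInt_unique (V := C_R_CompleteNormedModule)).
    apply (is_RInt_derive (V := C_R_CompleteNormedModule)).
    + intros th _. unfold F. eapply is_derive_C_eq.
      * apply is_derive_Cmult; [|apply is_derive_Cconst].
        apply is_derive_cexp, is_derive_Cscal, is_derive_circle.
      * cbv beta. pose proof Ci_nz. assert (RtoC t <> 0%C) by (intros E; now apply Ht, RtoC_inj).
        field. auto.
    + intros th _. apply cderivable_continuous, cderivable_mult; [apply cderivable_circle|].
      apply cderivable_cexp, cderivable_mult; [apply cderivable_const|apply cderivable_circle].
Qed.

End Moment.

(** * Independence of the radius *)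

Definition derivative_tower (g : nat -> R -> C) := forall k t, is_derive (g k) t (g (S k) t).

(* [node_poly_apply L g k] is [D^k (D - y_1) ... (D - y_n) g_0] for a tower [g_k = D^k g_0]. *)
Fixpoint node_poly_apply (L : list C) (g : nat -> R -> C) : nat -> R -> C :=
  match L with
  | nil => g
  | y :: L' => fun k t => Cminus (node_poly_apply L' g (S k) t) (Cmult y (node_poly_apply L' g k t))
  end.

Lemma derivative_tower_node_poly_apply (L : list C) (g : nat -> R -> C) :
  derivative_tower g -> derivative_tower (node_poly_apply L g).
Proof.
  intros H. induction L as [|y L IH]; simpl; [exact H|].
  intros k t. apply is_derive_Cminus; [apply IH|apply is_derive_Cscal, IH].
Qed.

Lemma node_poly_apply_at_0 (L : list C) (g : nat -> R -> C) (n : nat) :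
  (forall k, (k < n)%nat -> g k 0 = 0%C) ->
  forall k, (k + length L < n)%nat -> node_poly_apply L g k 0 = 0%C.
Proof.
  intros H. induction L as [|y L IH]; intros k Hk; simpl in *; [apply H; lia|].
  rewrite (IH (S k)), (IH k) by lia. ring.
Qed.

Lemma derivative_tower_unique (L : list C) (g : nat -> R -> C) : derivative_tower g ->
  (forall t, node_poly_apply L g 0 t = 0%C) -> (forall k, (k < length L)%nat -> g k 0 = 0%C) ->
  forall t, g 0%nat t = 0%C.
Proof.
  revert g. induction L as [|y L IH]; intros g Hg Happ H0; [exact Happ|].
  apply IH; [exact Hg| |intros k Hk; apply H0; simpl; lia].
  apply linear_ode_zero with y.
  - intros t. specialize (Happ t). simpl in Happ. apply Ceq_minus in Happ.
    rewrite <- Happ. apply (derivative_tower_node_poly_apply L g Hg 0%nat t).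
  - apply (node_poly_apply_at_0 L g (length (y :: L))); [exact H0|simpl; lia].
Qed.

Lemma node_poly_apply_minus (L : list C) (g1 g2 : nat -> R -> C) (k : nat) (t : R) :
  node_poly_apply L (fun k t => Cminus (g1 k t) (g2 k t)) k t
  = Cminus (node_poly_apply L g1 k t) (node_poly_apply L g2 k t).
Proof. revert k. induction L as [|y L IH]; intros k; simpl; [reflexivity|]. rewrite !IH. ring. Qed.

Lemma node_poly_apply_ext (L : list C) (g1 g2 : nat -> R -> C) :
  (forall k t, g1 k t = g2 k t) -> forall k t, node_poly_apply L g1 k t = node_poly_apply L g2 k t.
Proof. intros H. induction L as [|y L IH]; intros k t; simpl; [apply H|]. now rewrite !IH. Qed.

Lemma node_poly_apply_moment (M L : list C) (rho : R) : encloses rho (M ++ L) ->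
  forall k t, node_poly_apply M (moment rho (M ++ L)) k t = moment rho L k t.
Proof.
  revert L. induction M as [|y M IH]; intros L Hv k t; [reflexivity|]. simpl.
  assert (HP : Permutation (y :: M ++ L) (M ++ y :: L)) by apply Permutation_middle.
  assert (E : forall k t, node_poly_apply M (moment rho (y :: M ++ L)) k t = moment rho (y :: L) k t).
  { intros k' t'. rewrite <- (IH (y :: L)) by now apply (encloses_perm _ _ _ HP).
    apply node_poly_apply_ext. intros; now apply moment_perm. }
  rewrite !E. apply moment_cons, (encloses_app_r _ M), (encloses_perm _ _ _ HP), Hv.
Qed.

Lemma moment_radius_indep (L : list C) (r1 r2 t : R) : encloses r1 L -> encloses r2 L ->
  moment r1 L 0 t = moment r2 L 0 t.
Proof.
  intros H1 H2. pose proof (proj1 H1). pose proof (proj1 H2). apply Ceq_minus. revert t.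
  apply (derivative_tower_unique L (fun k t => Cminus (moment r1 L k t) (moment r2 L k t))).
  - intros k t. apply is_derive_Cminus; now apply is_derive_moment.
  - intros t. pose proof (node_poly_apply_moment L nil) as E. rewrite app_nil_r in E.
    rewrite node_poly_apply_minus, !E, !moment_nil by auto. ring.
  - intros k Hk. rewrite !moment_at_0, !circle_mean_eq by (auto || lia). ring.
Qed.

(** * Exponential divided differences *)

Lemma encloses_dd_radius (L : list C) : encloses (dd_radius L) L.
Proof.
  unfold dd_radius. set (s := fold_right _ 0 L).
  assert (Hs : 0 <= s /\ forall y, In y L -> Cmod y <= s).
  { unfold s. induction L as [|y L [H0 H]]; simpl; [split; [lra|tauto]|].
    pose proof (Cmod_ge_0 y). split; [lra|]. intros z [<-|Hz]; [lra|specialize (H z Hz); lra]. }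
  split; [lra|]. apply Forall_forall. intros y Hy. pose proof (proj2 Hs y Hy). lra.
Qed.

Lemma expdd_moment (t : R) (L : list C) (rho : R) : encloses rho L -> expdd t L = moment rho L 0 t.
Proof.
  intros Hv. rewrite (moment_radius_indep L rho (dd_radius L)) by (apply Hv || apply encloses_dd_radius).
  unfold expdd, divdiff, moment, moment_weight. cbv zeta. f_equal. apply cRInt_ext. intros th.
  unfold circle, node_poly. simpl. unfold Cdiv. ring.
Qed.

Lemma expdd_nil (t : R) : expdd t nil = 0%C.
Proof. rewrite (expdd_moment _ _ 1); [apply moment_nil; lra|split; [lra|constructor]]. Qed.

Lemma expdd_at_0 (L : list C) : expdd 0 L = kronecker 1 (length L).
Proof.
  destruct L as [|y L]; [apply expdd_nil|].
  rewrite (expdd_moment _ _ _ (encloses_dd_radius _)), moment_at_0, circle_mean_eq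
    by (apply encloses_dd_radius || (simpl; lia)).
  reflexivity.
Qed.

Lemma expdd_perm (t : R) (L1 L2 : list C) : Permutation L1 L2 -> expdd t L1 = expdd t L2.
Proof.
  intros HP. pose proof (encloses_dd_radius L1) as Hv.
  rewrite !(expdd_moment t _ (dd_radius L1)) by (apply Hv || now apply (encloses_perm _ L1)).
  now apply moment_perm.
Qed.

Lemma is_derive_expdd_cons (y : C) (L : list C) (t : R) :
  is_derive (fun s => expdd s (y :: L)) t (Cplus (Cmult y (expdd t (y :: L))) (expdd t L)).
Proof.
  pose proof (encloses_dd_radius (y :: L)) as Hv. set (rho := dd_radius (y :: L)) in Hv.
  apply (is_derive_ext (moment rho (y :: L) 0)); [intros s; symmetry; now apply expdd_moment|].
  rewrite !(expdd_moment t _ rho) by (apply Hv || now apply encloses_cons in Hv).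
  rewrite <- (moment_cons _ y L 0 t Hv).
  eapply is_derive_C_eq; [now apply is_derive_moment|ring].
Qed.

Lemma cderivable_expdd (L : list C) : cderivable (fun s => expdd s L).
Proof.
  intros t. destruct L as [|y L].
  - exists (RtoC 0). apply (is_derive_ext (fun _ : R => RtoC 0)); [intros; now rewrite expdd_nil|].
    apply is_derive_Cconst.
  - eexists. apply is_derive_expdd_cons.
Qed.

Lemma is_derive_expdd_insert (L1 L2 : list C) (y : C) (t : R) :
  is_derive (fun s => expdd s (L1 ++ y :: L2)) t
    (Cplus (Cmult y (expdd t (L1 ++ y :: L2))) (expdd t (L1 ++ L2))).
Proof.
  assert (HP : forall s, expdd s (L1 ++ y :: L2) = expdd s (y :: L1 ++ L2))
    by (intros; apply expdd_perm, Permutation_sym, Permutation_middle).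
  apply (is_derive_ext (fun s => expdd s (y :: L1 ++ L2))); [intros; now rewrite HP|].
  rewrite HP. apply is_derive_expdd_cons.
Qed.

Lemma is_derive_expdd_neg_insert (L1 L2 : list C) (y : C) (t : R) :
  is_derive (fun s => expdd (- s) (L1 ++ y :: L2)) t
    (Cminus (Cmult (Copp y) (expdd (- t) (L1 ++ y :: L2))) (expdd (- t) (L1 ++ L2))).
Proof.
  eapply is_derive_C_eq; [apply (is_derive_comp_opp (fun s => expdd s _)), is_derive_expdd_insert|ring].
Qed.

Lemma length_xs (x : nat -> C) (r j : nat) : length (xs x r j) = (S j - r)%nat.
Proof. unfold xs. now rewrite length_map, length_seq. Qed.

Lemma xs_snoc (x : nat -> C) (r j : nat) : (r <= S j)%nat -> xs x r (S j) = xs x r j ++ x (S j) :: nil.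
Proof.
  intros H. unfold xs. replace (S (S j) - r)%nat with (S (S j - r)) by lia.
  rewrite seq_S, map_app. now replace (r + (S j - r))%nat with (S j) by lia.
Qed.

Lemma xs_cons (x : nat -> C) (j q : nat) : (j <= q)%nat -> xs x j q = x j :: xs x (S j) q.
Proof. intros H. unfold xs. now replace (S q - j)%nat with (S (S q - S j)) by lia. Qed.

Lemma xs_empty (x : nat -> C) (j : nat) : xs x (S j) j = nil.
Proof. unfold xs. now rewrite Nat.sub_diag. Qed.

Lemma xs_single (x : nat -> C) (r : nat) : xs x r r = x r :: nil.
Proof. unfold xs. now rewrite Nat.sub_succ_l, Nat.sub_diag by lia. Qed.

Lemma xs_app (x : nat -> C) (r j q : nat) : (r <= S j)%nat -> (j <= q)%nat ->
  xs x r q = xs x r j ++ xs x (S j) q.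
Proof.
  intros H1 H2. unfold xs. rewrite <- map_app. f_equal.
  replace (S q - r)%nat with ((S j - r) + (S q - S j))%nat by lia. rewrite seq_app. do 2 f_equal. lia.
Qed.

Lemma expdd_at_0_xs (x : nat -> C) (i j : nat) : expdd 0 (xs x i j) = kronecker i j.
Proof.
  rewrite expdd_at_0, length_xs. unfold kronecker.
  destruct (Nat.eqb_spec 1 (S j - i)), (Nat.eqb_spec i j); auto; lia.
Qed.

Section DividedDifferenceIdentities.

Variable x : nat -> C.

Lemma expdd_add (r j : nat) (s t : R) : (r <= j)%nat ->
  expdd (s + t) (xs x r j) = csum (fun i => Cmult (expdd s (xs x r i)) (expdd t (xs x i j))) r j.
Proof.
  intros Hrj. replace j with (r + (j - r))%nat by lia. generalize (j - r)%nat as d. clear j Hrj.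
  intros d. revert t. induction d as [|d IH]; intros t.
  - rewrite Nat.add_0_r, csum_single, !xs_single. revert t.
    apply (linear_ode_unique (x r) _ _ (fun _ => RtoC 0)).
    + intros t. apply (is_derive_comp_shift (fun u => expdd u _)).
      eapply is_derive_C_eq; [apply is_derive_expdd_cons|now rewrite expdd_nil].
    + intros t. eapply is_derive_C_eq; [apply is_derive_Cscal, is_derive_expdd_cons|].
      rewrite expdd_nil. ring.
    + rewrite Rplus_0_r, <- xs_single, expdd_at_0_xs. unfold kronecker. rewrite Nat.eqb_refl. ring.
  - replace (r + S d)%nat with (S (r + d)) by lia. set (j := (r + d)%nat) in *. revert t.
    apply (linear_ode_unique (x (S j)) _ _ (fun t => expdd (s + t) (xs x r j))).
    + intros t. apply (is_derive_comp_shift (fun u => expdd u _)). rewrite xs_snoc by lia.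
      eapply is_derive_C_eq; [apply is_derive_expdd_insert|now rewrite app_nil_r].
    + intros t. eapply is_derive_C_eq.
      { apply is_derive_csum. intros i Hi. apply is_derive_Cscal. rewrite xs_snoc by lia.
        apply is_derive_expdd_insert. }
      rewrite (csum_ext _ (fun i =>
        Cplus (Cmult (x (S j)) (Cmult (expdd s (xs x r i)) (expdd t (xs x i (S j)))))
              (Cmult (expdd s (xs x r i)) (expdd t (xs x i j))))).
      2: { intros i Hi. rewrite xs_snoc, app_nil_r by lia. ring. }
      rewrite csum_plus, csum_Cscal, IH, (csum_Sm (fun i => Cmult _ (expdd t (xs x i j)))) by lia.
      rewrite xs_empty, expdd_nil. ring.
    + rewrite Rplus_0_r, (csum_ext _ (fun i => Cmult (expdd s (xs x r i)) (kronecker i (S j)))).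
      * now rewrite csum_kronecker by lia.
      * intros i _. now rewrite expdd_at_0_xs.
Qed.

Lemma expdd_inverse (r j : nat) (a : R) : (r <= j)%nat ->
  csum (fun i => Cmult (expdd a (xs x r i)) (expdd (- a) (xs x i j))) r j = kronecker r j.
Proof. intros H. rewrite <- expdd_add, Rplus_opp_r by exact H. apply expdd_at_0_xs. Qed.

Lemma csum_expdd_snoc (j q : nat) (t : R) : (j <= S q)%nat ->
  csum (fun m => expdd t (xs x j q ++ x m :: nil)) j q = Cmult (RtoC t) (expdd t (xs x j q)).
Proof.
  intros Hj. remember (S q - j)%nat as d eqn:Hd. revert j t Hj Hd. induction d as [|d IH]; intros j t Hj Hd.
  - replace j with (S q) by lia. rewrite csum_empty, xs_empty, expdd_nil by lia. symmetry. apply Cmult_0_r.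
  - assert (Hjq : (j <= q)%nat) by lia. rewrite xs_cons by exact Hjq. revert t.
    apply (linear_ode_unique (x j) _ _
      (fun t => Cplus (expdd t (x j :: xs x (S j) q)) (Cmult (RtoC t) (expdd t (xs x (S j) q))))).
    + intros t. eapply is_derive_C_eq; [apply is_derive_csum; intros m _; apply is_derive_expdd_cons|].
      rewrite (csum_ext _ (fun m => Cplus (Cmult (x j) (expdd t ((x j :: xs x (S j) q) ++ x m :: nil)))
                                          (expdd t (xs x (S j) q ++ x m :: nil)))) by (intros; reflexivity).
      rewrite csum_plus, csum_Cscal, (csum_Sn (fun m => expdd t (xs x (S j) q ++ x m :: nil))), IH by lia.
      rewrite (expdd_perm _ (xs x (S j) q ++ x j :: nil) (x j :: xs x (S j) q))
        by apply Permutation_sym, Permutation_cons_append.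
      ring.
    + intros t. eapply is_derive_C_eq.
      * apply is_derive_Cmult; [apply is_derive_RtoC_id|apply is_derive_expdd_cons].
      * cbv beta; ring.
    + rewrite (csum_ext _ (fun _ => RtoC 0)), csum_zero; [ring|].
      intros m _. rewrite expdd_at_0. unfold kronecker.
      destruct (Nat.eqb_spec 1 (length ((x j :: xs x (S j) q) ++ x m :: nil))) as [E|]; [|reflexivity].
      simpl in E. rewrite length_app, length_xs in E. simpl in E. lia.
Qed.

End DividedDifferenceIdentities.

(** * The integral identity *)

Section IntegralIdentity.

Variables (x : nat -> C) (J q : nat).

Definition tau_weight (t : R) : C := Cmult (RtoC t) (expdd (- t) (xs x J q)).

Definition weighted_integrand (r i : nat) (t : R) : C := Cmult (tau_weight t) (expdd t (xs x r i)).

Definition weighted_integral (r i : nat) (a : R) : C := cRInt (weighted_integrand r i) 0 a.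

Definition integral_side (r j : nat) (a : R) : C :=
  csum (fun i => Cmult (expdd (- a) (xs x i j)) (weighted_integral r i a)) r j.

Definition dd_side (r j : nat) (a : R) : C :=
  csum (fun m => expdd (- a) (xs x r j ++ xs x J q ++ x m :: nil)) J q.

Lemma cderivable_tau_weight : cderivable tau_weight.
Proof.
  apply cderivable_mult; [apply cderivable_RtoC_id|].
  intros t. destruct (cderivable_expdd (xs x J q) (- t)) as [l Hl].
  eexists. apply (is_derive_comp_opp (fun s => expdd s (xs x J q))), Hl.
Qed.

Lemma cderivable_weighted_integrand (r i : nat) : cderivable (weighted_integrand r i).
Proof. apply cderivable_mult; [apply cderivable_tau_weight|apply cderivable_expdd]. Qed.

Lemma is_derive_weighted_integral (r i : nat) (a : R) :
  is_derive (weighted_integral r i) a (Cmult (tau_weight a) (expdd a (xs x r i))).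
Proof.
  apply (is_derive_RInt (V := C_R_CompleteNormedModule) (weighted_integrand r i) _ 0).
  - apply filter_forall. intros b. apply (RInt_correct (V := C_R_CompleteNormedModule)).
    apply ex_cRInt_cderivable, cderivable_weighted_integrand.
  - apply cderivable_continuous, cderivable_weighted_integrand.
Qed.

Lemma weighted_integral_0 (r i : nat) : weighted_integral r i 0 = 0%C.
Proof. apply (RInt_point (V := C_R_CompleteNormedModule)). Qed.

Lemma is_derive_expdd_neg_xs (i j : nat) (a : R) : (i <= S j)%nat ->
  is_derive (fun s => expdd (- s) (xs x i (S j))) a
    (Cminus (Cmult (Copp (x (S j))) (expdd (- a) (xs x i (S j)))) (expdd (- a) (xs x i j))).
Proof.
  intros H. rewrite xs_snoc by exact H.
  eapply is_derive_C_eq; [apply is_derive_expdd_neg_insert|now rewrite app_nil_r].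
Qed.

Lemma is_derive_integral_side (r j : nat) (a : R) : (r <= j)%nat ->
  is_derive (integral_side r (S j)) a
    (Cplus (Cmult (Copp (x (S j))) (integral_side r (S j) a)) (Copp (integral_side r j a))).
Proof.
  intros H. eapply is_derive_C_eq.
  { apply is_derive_csum. intros i Hi.
    apply is_derive_Cmult; [apply is_derive_expdd_neg_xs; lia|apply is_derive_weighted_integral]. }
  rewrite (csum_ext _ (fun i =>
    Cplus (Cmult (Copp (x (S j))) (Cmult (expdd (- a) (xs x i (S j))) (weighted_integral r i a)))
      (Cplus (Cmult (RtoC (-1)) (Cmult (expdd (- a) (xs x i j)) (weighted_integral r i a)))
             (Cmult (tau_weight a) (Cmult (expdd a (xs x r i)) (expdd (- a) (xs x i (S j)))))))).
  2: { intros i Hi. unfold weighted_integrand. ring. }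
  rewrite !csum_plus, !csum_Cscal, expdd_inverse by lia.
  rewrite (csum_Sm (fun i => Cmult (expdd (- a) (xs x i j)) _)) by lia.
  rewrite xs_empty, expdd_nil. unfold kronecker, integral_side.
  destruct (Nat.eqb_spec r (S j)); [lia|ring].
Qed.

Lemma is_derive_integral_side_diag (r : nat) (a : R) :
  is_derive (integral_side r r) a (Cplus (Cmult (Copp (x r)) (integral_side r r a)) (tau_weight a)).
Proof.
  pose proof (expdd_inverse x r r a (le_n r)) as Hinv.
  unfold integral_side, kronecker in *. rewrite csum_single, Nat.eqb_refl in Hinv.
  apply (is_derive_ext (fun a => Cmult (expdd (- a) (xs x r r)) (weighted_integral r r a)));
    [intros; now rewrite csum_single|].
  eapply is_derive_C_eq.
  { apply is_derive_Cmult; [|apply is_derive_weighted_integral].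
    rewrite xs_single. apply (is_derive_expdd_neg_insert nil nil). }
  rewrite csum_single. rewrite xs_single in *. simpl. rewrite expdd_nil.
  transitivity
    (Cplus (Cmult (Copp (x r)) (Cmult (expdd (- a) (x r :: nil)) (weighted_integral r r a)))
           (Cmult (tau_weight a) (Cmult (expdd a (x r :: nil)) (expdd (- a) (x r :: nil)))));
    [unfold weighted_integrand; ring|].
  rewrite Hinv. ring.
Qed.

Lemma is_derive_dd_side (r j : nat) (a : R) : (r <= j)%nat ->
  is_derive (dd_side r (S j)) a
    (Cplus (Cmult (Copp (x (S j))) (dd_side r (S j) a)) (Copp (dd_side r j a))).
Proof.
  intros H. assert (Hsplit : forall m, xs x r (S j) ++ xs x J q ++ x m :: nil
                                       = xs x r j ++ x (S j) :: xs x J q ++ x m :: nil)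
    by (intros; rewrite xs_snoc, <- app_assoc by lia; reflexivity).
  unfold dd_side. eapply is_derive_C_eq.
  { apply is_derive_csum. intros m _. rewrite Hsplit. apply is_derive_expdd_neg_insert. }
  rewrite (csum_ext _ (fun m =>
    Cplus (Cmult (Copp (x (S j))) (expdd (- a) (xs x r (S j) ++ xs x J q ++ x m :: nil)))
          (Cmult (RtoC (-1)) (expdd (- a) (xs x r j ++ xs x J q ++ x m :: nil))))).
  - rewrite csum_plus, !csum_Cscal. ring.
  - intros m _. rewrite Hsplit. ring.
Qed.

Lemma is_derive_dd_side_diag (r : nat) (a : R) : (J <= q)%nat ->
  is_derive (dd_side r r) a (Cplus (Cmult (Copp (x r)) (dd_side r r a)) (tau_weight a)).
Proof.
  intros HJq. unfold dd_side. rewrite xs_single. eapply is_derive_C_eq.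
  { apply is_derive_csum. intros m _. apply (is_derive_expdd_neg_insert nil). }
  rewrite (csum_ext _ (fun m => Cplus (Cmult (Copp (x r)) (expdd (- a) (x r :: xs x J q ++ x m :: nil)))
                                      (Cmult (RtoC (-1)) (expdd (- a) (xs x J q ++ x m :: nil))))).
  - rewrite csum_plus, !csum_Cscal, csum_expdd_snoc by lia.
    unfold tau_weight. cbn [app]. rewrite RtoC_opp. ring.
  - intros m _. simpl. ring.
Qed.

Lemma integral_side_0 (r j : nat) : integral_side r j 0 = 0%C.
Proof.
  unfold integral_side. rewrite (csum_ext _ (fun _ => RtoC 0)); [apply csum_zero|].
  intros i _. rewrite weighted_integral_0. ring.
Qed.

Lemma dd_side_0 (r j : nat) : (r <= j)%nat -> dd_side r j 0 = 0%C.
Proof.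
  intros H. unfold dd_side. rewrite (csum_ext _ (fun _ => RtoC 0)); [apply csum_zero|].
  intros m _. rewrite Ropp_0, expdd_at_0. unfold kronecker. rewrite !length_app, !length_xs.
  destruct (Nat.eqb_spec 1 (S j - r + (S q - J + length (x m :: nil)))) as [E|]; [|reflexivity].
  cbn [length] in E. lia.
Qed.

Lemma integral_side_eq_dd_side (r j : nat) (a : R) : (J <= q)%nat -> (r <= j)%nat ->
  integral_side r j a = dd_side r j a.
Proof.
  intros HJq H. replace j with (r + (j - r))%nat by lia. generalize (j - r)%nat as d. clear j H.
  intros d. revert a. induction d as [|d IH].
  - rewrite Nat.add_0_r. apply (linear_ode_unique (Copp (x r)) _ _ tau_weight);
      [apply is_derive_integral_side_diag|intros; now apply is_derive_dd_side_diag|].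
    rewrite integral_side_0, dd_side_0; [reflexivity|lia].
  - replace (r + S d)%nat with (S (r + d)) by lia.
    apply (linear_ode_unique (Copp (x (S (r + d)))) _ _ (fun a => Copp (integral_side r (r + d) a))).
    + intros a. apply is_derive_integral_side. lia.
    + intros a. rewrite IH. apply is_derive_dd_side. lia.
    + rewrite integral_side_0, dd_side_0; [reflexivity|lia].
Qed.

Lemma dd_side_eq (r : nat) (a : R) : (J <= q)%nat -> (r <= J)%nat ->
  dd_side r J a = csum (fun m => expdd (- a) (xs x r q ++ x J :: x m :: nil)) J q.
Proof.
  intros HJq H. apply csum_ext. intros m _. apply expdd_perm.
  rewrite (xs_cons x J q), (xs_app x r J q), <- !app_assoc by lia.
  apply Permutation_app_head, Permutation_middle.
Qed.

Lemma cderivable_weighted_sum (r : nat) (a : R) :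
  cderivable (fun t => csum (fun i => Cmult (expdd (- a) (xs x i J)) (weighted_integrand r i t)) r J).
Proof.
  apply cderivable_csum. intros i. apply cderivable_mult; [apply cderivable_const|].
  apply cderivable_weighted_integrand.
Qed.

Lemma cRInt_product_expansion (beta : R) :
  cRInt (fun tau => Cmult (RtoC tau) (Cmult (expdd (- tau) (xs x J q)) (expdd (- (beta - tau)) (xs x 0 J))))
    0 (beta / 2)
  = csum (fun r => Cmult (expdd (- (beta / 2)) (xs x 0 r)) (integral_side r J (beta / 2))) 0 J.
Proof.
  set (a := beta / 2).
  rewrite (cRInt_ext _ (fun tau => csum (fun r => Cmult (expdd (- a) (xs x 0 r))
     (csum (fun i => Cmult (expdd (- a) (xs x i J)) (weighted_integrand r i tau)) r J)) 0 J)).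
  - rewrite cRInt_csum.
    + apply csum_ext. intros r Hr.
      rewrite cRInt_Cscal by apply ex_cRInt_cderivable, cderivable_weighted_sum.
      f_equal. rewrite cRInt_csum.
      * apply csum_ext. intros i _. apply cRInt_Cscal, ex_cRInt_cderivable, cderivable_weighted_integrand.
      * intros i. apply cderivable_mult; [apply cderivable_const|apply cderivable_weighted_integrand].
    + intros r. apply cderivable_mult; [apply cderivable_const|apply cderivable_weighted_sum].
  - intros tau. replace (- (beta - tau)) with (- a + (tau + - a)) by (unfold a; field).
    rewrite expdd_add, <- !csum_Cscal by lia. apply csum_ext. intros r Hr.
    rewrite expdd_add, <- !csum_Cscal by lia. apply csum_ext. intros i _.
    unfold weighted_integrand, tau_weight. ring.
Qed.

End IntegralIdentity.

Theorem corollary2 (x : nat -> C) (q j : nat) (beta : R) :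
  (j <= q)%nat -> 0 < beta ->
  cRInt (fun tau => Cmult (RtoC tau)
           (Cmult (expdd (- tau) (xs x j q)) (expdd (- (beta - tau)) (xs x 0 j))))
        0 (beta / 2)
  = sum_n_m (fun r : nat =>
      Cmult (expdd (- (beta / 2)) (xs x 0 r))
            (sum_n_m (fun m : nat =>
               expdd (- (beta / 2)) (xs x r q ++ x j :: x m :: nil)) j q)) 0 j.
Proof.
  intros Hjq _. rewrite cRInt_product_expansion.
  apply csum_ext. intros r Hr. f_equal.
  now rewrite integral_side_eq_dd_side, dd_side_eq by lia.
Qed.
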